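(* Let $\Gamma$ be a distance-regular graph with diameter $D\ge3$ which is neither bipartite nor almost bipartite. Let $\sigma_0,\dots,\sigma_D$ and $\rho_0,\dots,\rho_D$ be nontrivial pseudo cosine sequences forming a tight pair, and assume $\varepsilon=1$ is an auxiliary parameter for this pair. Then: (i) $\rho_i=(-1)^i$ for $0\le i\le D-1$ and $\rho_D\ne(-1)^D$; (ii) $\sigma_{D-1}=\sigma_D$; (iii) $a_i=0$ for $0\le i\le D-2$ and $a_{D-1}\ne0$.
   Context: $\Gamma$ is a finite connected undirected graph without loops or multiple edges, distance-regular with diameter $D$, intersection numbers $a_i,b_i,c_i$ ($c_0=0$, $b_D=0$), valency $k$, $c_i+a_i+b_i=k$. Bipartite: $a_i=0$ for all $0\le i\le D$; almost bipartite: $a_D\ne0$, $a_i=0$ for $0\le i\le D-1$. For $\theta\in\mathbb{R}$ the pseudo cosine sequence for $\theta$ is the sequence of reals $\sigma_0,\dots,\sigma_D$ with $\sigma_0=1$ and $c_i\sigma_{i-1}+a_i\sigma_i+b_i\sigma_{i+1}=\theta\sigma_i$ for $0\le i\le D-1$; nontrivial means $\sigma_1\ne1$. Pseudo cosine sequences $\sigma_i$, $\rho_i$ form a tight pair if $(\sigma_i\rho_i)_{i=0}^D$ is a pseudo cosine sequence. For a tight pair of nontrivial pseudo cosine sequences, an auxiliary parameter is a real $\varepsilon$ with $\sigma_i\rho_i-\sigma_{i-1}\rho_{i-1}=\varepsilon(\sigma_{i-1}\rho_i-\sigma_i\rho_{i-1})$ for $1\le i\le D$. *)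

From mathcomp Require Import all_boot all_order all_algebra.
Set Implicit Arguments. Unset Strict Implicit. Unset Printing Implicit Defensive.
Import Order.TTheory GRing.Theory Num.Theory.

Section Graph.
Variable T : finType.
Variable e : rel T.

Fixpoint ball (n : nat) (x : T) : {set T} :=
  match n with
  | 0 => [set x]
  | n'.+1 => ball n' x :|: [set z | [exists y in ball n' x, e y z]]
  end.

(* graph distance (path length of a shortest path); for unreachable y
   it returns #|T| (irrelevant for connected graphs) *)
Definition gdist (x y : T) : nat := find (fun n => y \in ball n x) (iota 0 #|T|).

Definition distance_regular (D : nat) (a b c : nat -> nat) : Prop :=
  [/\ symmetric e, irreflexive e, (forall x y, connect e x y),
      ((forall x y, gdist x y <= D) /\ (exists x y, gdist x y = D)) &
      (forall (i : nat) (x y : T), gdist x y = i ->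
         [/\ #|[set z | e y z & (gdist x z).+1 == i]| = c i,
             #|[set z | e y z & gdist x z == i]| = a i &
             #|[set z | e y z & gdist x z == i.+1]| = b i])].
End Graph.

Local Open Scope ring_scope.

Section Cosine.
Variable R : realFieldType.
Variables (D : nat) (a b c : nat -> nat).

(* pseudo cosine sequence for theta (indices 0..D); c_0 = 0 so the i = 0 term
   c_0 * sigma_{0-1} vanishes *)
Definition pseudo_cosine (theta : R) (s : nat -> R) : Prop :=
  s 0%N = 1 /\
  forall i : nat, (i < D)%N ->
    (c i)%:R * s i.-1 + (a i)%:R * s i + (b i)%:R * s i.+1 = theta * s i.

Definition is_pseudo_cosine (s : nat -> R) : Prop := exists theta, pseudo_cosine theta s.

Definition nontrivial_pc (s : nat -> R) : Prop := is_pseudo_cosine s /\ s 1%N != 1.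

Definition tight_pair (s r : nat -> R) : Prop :=
  is_pseudo_cosine s /\ is_pseudo_cosine r /\ is_pseudo_cosine (fun i => s i * r i).

Definition auxiliary_parameter (s r : nat -> R) (eps : R) : Prop :=
  forall i : nat, (1 <= i <= D)%N ->
    s i * r i - s i.-1 * r i.-1 = eps * (s i.-1 * r i - s i * r i.-1).
End Cosine.

Definition bipartite_ia (D : nat) (a : nat -> nat) : Prop :=
  forall i, (i <= D)%N -> a i = 0%N.

Definition almost_bipartite_ia (D : nat) (a : nat -> nat) : Prop :=
  a D <> 0%N /\ forall i, (i <= D.-1)%N -> a i = 0%N.

From mathcomp Require Import all_boot all_order all_algebra.
From mathcomp Require Import zify ring lra.
Import Order.TTheory GRing.Theory Num.Theory.
Set Implicit Arguments. Unset Strict Implicit.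

(* Write k = b_0 for the valency. The recurrence at i = 0 gives
   theta_sigma = k sigma_1 and theta_rho = k rho_1, and eps = 1 reads
   (sigma_i - sigma_(i-1)) (rho_i + rho_(i-1)) = 0; as sigma_1 <> sigma_0 we get
   rho_1 = -1, so rho is the pseudo cosine sequence for -k.  Let t be the first
   index with a_t <> 0; it exists and 1 <= t < D because Gamma is neither
   bipartite nor almost bipartite.  While a_i = 0 the recurrence for -k is
   solved by (-1)^i, so rho_i = (-1)^i for i <= t, and at i = t it gives
   w := (-1)^t rho_(t+1) = -1 - 2 a_t / b_t < -1.  Hence rho_(t+1) <> -rho_t and
   sigma_(t+1) = sigma_t.  If t + 2 <= D, then either sigma_(t+2) = sigma_(t+1),
   and the recurrence at t + 1 forces sigma_(t+1) (1 - sigma_1) = 0, after which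
   two consecutive zeros propagate down to sigma_0 = 1 (since c_i > 0); or
   rho_(t+2) = -rho_(t+1), and the recurrence at t + 1 becomes
   c_(t+1) (1 + w) + 2 a_(t+1) w = 0, impossible for w < -1.  So t + 1 = D. *)

Section GraphDistance.
Variables (T : finType) (e : rel T).
Hypotheses (e_sym : symmetric e) (e_connected : forall x y, connect e x y).

Lemma subset_ball n m x : (n <= m)%N -> ball e n x \subset ball e m x.
Proof.
elim: m => [|m IH]; first by rewrite leqn0 => /eqP ->.
rewrite leq_eqVlt => /orP [/eqP -> //| ltnm].
exact: subset_trans (IH ltnm) (subsetUl _ _).
Qed.

Lemma ball_adj n x z y : e x z -> y \in ball e n z -> y \in ball e n.+1 x.
Proof.
elim: n y => [|n IH] y exz.
  rewrite inE => /eqP ->; rewrite in_setU; apply/orP; right; rewrite inE.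
  by apply/existsP; exists x; rewrite inE eqxx.
rewrite [ball e n.+1 z]/= in_setU => /orP [yn|].
  exact: subsetP (subset_ball x (leqnSn _)) _ (IH _ exz yn).
rewrite inE => /existsP [w /andP [wn ewy]].
rewrite [ball e n.+2 x]/= in_setU; apply/orP; right; rewrite inE.
by apply/existsP; exists w; rewrite IH.
Qed.

Lemma last_path_in_ball x p : path e x p -> last x p \in ball e (size p) x.
Proof.
elim: p x => [|z p IH] x /=; first by rewrite inE.
by case/andP=> exz pp; apply: ball_adj exz (IH _ pp).
Qed.

Lemma reachable_in_ball x y : exists2 n, (n < #|T|)%N & y \in ball e n x.
Proof.
have /connectP [p pp ->] := e_connected x y.
case/shortenP: pp => p' pp' up' _.
exists (size p'); last exact: last_path_in_ball.
by have := max_card (mem (x :: p')); rewrite (card_uniqP up').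
Qed.

Lemma in_ball x y m : (y \in ball e m x) = (gdist e x y <= m)%N.
Proof.
have [n ltnT yn] := reachable_in_ball x y.
have hasP : has (fun n => y \in ball e n x) (iota 0 #|T|).
  by apply/hasP; exists n; rewrite ?mem_iota.
have := hasP; rewrite has_find size_iota => lt_dist.
have y_dist : y \in ball e (gdist e x y) x by have := nth_find 0 hasP; rewrite nth_iota.
apply/idP/idP => [ym|le_dist]; last exact: subsetP (subset_ball x le_dist) _ y_dist.
rewrite leqNgt; apply/negP => ltm.
have := before_find 0 ltm; rewrite nth_iota ?add0n ?ym //; exact: ltn_trans lt_dist.
Qed.

Lemma gdist_eq0 x y : (gdist e x y == 0%N) = (y == x).
Proof. by rewrite -leqn0 -in_ball inE. Qed.

Lemma gdist_adj x y z : e y z -> (gdist e x z <= (gdist e x y).+1)%N.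
Proof.
move=> eyz; rewrite -in_ball in_setU; apply/orP; right; rewrite inE.
by apply/existsP; exists y; rewrite in_ball leqnn eyz.
Qed.

Lemma gdist_pred x y i : gdist e x y = i.+1 -> exists2 z, e y z & gdist e x z = i.
Proof.
move=> dy.
have : y \notin ball e i x by rewrite in_ball dy ltnn.
have : y \in ball e i.+1 x by rewrite in_ball dy.
rewrite in_setU => /orP [-> //| + _]; rewrite inE => /existsP [z /andP [zi ezy]].
exists z; first by rewrite e_sym.
by move: zi; rewrite in_ball; have := gdist_adj x ezy; rewrite dy; lia.
Qed.

End GraphDistance.

Definition intersection_array (D : nat) (a b c : nat -> nat) : Prop :=
  [/\ c 0%N = 0%N, a 0%N = 0%N,
      forall i, (i <= D)%N -> (c i + a i + b i)%N = b 0%N,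
      forall i, (0 < i <= D)%N -> (0 < c i)%N &
      forall i, (i < D)%N -> (0 < b i)%N].

Section DistanceRegular.
Variables (T : finType) (e : rel T) (D : nat) (a b c : nat -> nat).
Hypothesis drg : distance_regular e D a b c.

Let e_sym : symmetric e. Proof. by case: drg. Qed.
Let e_irr : irreflexive e. Proof. by case: drg. Qed.
Let e_connected : forall x y, connect e x y. Proof. by case: drg. Qed.
Let drg_layers i x y : gdist e x y = i ->
  [/\ #|[set z | e y z & (gdist e x z).+1 == i]| = c i,
      #|[set z | e y z & gdist e x z == i]| = a i &
      #|[set z | e y z & gdist e x z == i.+1]| = b i].
Proof. by case: drg => _ _ _ _; apply. Qed.

Let gdist_xx x : gdist e x x = 0%N. Proof. by apply/eqP; rewrite (gdist_eq0 e_connected). Qed.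

Lemma drg_exists_dist i : (i <= D)%N -> exists x y, gdist e x y = i.
Proof.
move=> iD; have [_ _ _ [_ [x [y xy]]] _] := drg.
suff [z xz] : exists z, gdist e x z = (D - (D - i))%N by exists x, z; rewrite xz subKn.
elim: (D - i)%N (leq_subr i D) => [|m IH] mD; first by exists y; rewrite subn0.
have [z xz] := IH (ltnW mD).
have [w _ xw] : exists2 w, e z w & gdist e x w = (D - m.+1)%N.
  by apply: gdist_pred => //; rewrite xz; lia.
by exists w.
Qed.

Lemma drg_c0 : c 0%N = 0%N.
Proof.
have [x _] := drg_exists_dist (leq0n D); have [<- _ _] := drg_layers (gdist_xx x).
by apply/eqP; rewrite cards_eq0; apply/eqP/setP => z; rewrite !inE andbF.
Qed.

Lemma drg_a0 : a 0%N = 0%N.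
Proof.
have [x _] := drg_exists_dist (leq0n D); have [_ <- _] := drg_layers (gdist_xx x).
apply/eqP; rewrite cards_eq0; apply/eqP/setP => z; rewrite !inE (gdist_eq0 e_connected).
by case: eqP => [->|]; rewrite ?e_irr ?andbF.
Qed.

Lemma drg_valency y : #|[set z | e y z]| = b 0%N.
Proof.
have [_ _ <-] := drg_layers (gdist_xx y); apply: eq_card => z; rewrite !inE.
case ez: (e y z) => //=; have := gdist_adj e_connected y ez; rewrite gdist_xx.
have : gdist e y z != 0%N.
  by rewrite (gdist_eq0 e_connected); apply: contraTneq ez => ->; rewrite e_irr.
by case: (gdist e y z) => [|[]].
Qed.

Lemma drg_cab i : (i <= D)%N -> (c i + a i + b i)%N = b 0%N.
Proof.
move=> iD; have [x [y xy]] := drg_exists_dist iD; have [<- <- <-] := drg_layers xy.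
rewrite -(drg_valency y) -!sum1_card !(big_mkcond (fun z => z \in _)) -!big_split /=.
apply: eq_bigr => z _; rewrite !inE; case ez: (e y z) => //=.
have up := gdist_adj e_connected x ez.
have down : (gdist e x y <= (gdist e x z).+1)%N.
  by apply: (gdist_adj e_connected); rewrite e_sym.
rewrite xy in up down; do 3 case: eqP => /= ?; lia.
Qed.

Lemma drg_c_gt0 i : (0 < i <= D)%N -> (0 < c i)%N.
Proof.
case: i => // i /= iD; have [x [y xy]] := drg_exists_dist iD; have [<- _ _] := drg_layers xy.
have [z eyz xz] := gdist_pred e_sym e_connected xy.
by apply/card_gt0P; exists z; rewrite !inE eyz xz eqxx.
Qed.

Lemma drg_b_gt0 i : (i < D)%N -> (0 < b i)%N.
Proof.
move=> iD; have [x [y xy]] := drg_exists_dist iD.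
have [z eyz xz] := gdist_pred e_sym e_connected xy; have [_ _ <-] := drg_layers xz.
by apply/card_gt0P; exists y; rewrite !inE e_sym eyz xy eqxx.
Qed.

Lemma drg_intersection_array : intersection_array D a b c.
Proof.
split; [exact: drg_c0 | exact: drg_a0 | exact: drg_cab | exact: drg_c_gt0 | exact: drg_b_gt0].
Qed.

End DistanceRegular.

Local Open Scope ring_scope.

Lemma first_nonzero_a (D : nat) (a : nat -> nat) :
    ~ bipartite_ia D a -> ~ almost_bipartite_ia D a -> a 0%N = 0%N ->
  exists t, [/\ (0 < t < D)%N, a t != 0%N & forall j, (j < t)%N -> a j = 0%N].
Proof.
move=> not_bip not_abip a0.
have ex : exists t, (t <= D)%N && (a t != 0%N).
  have /hasP [t] : has (fun t => a t != 0%N) (iota 0 D.+1).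
    apply/negPn/negP => /hasPn no_a; apply: not_bip => i iD.
    by apply/eqP/negbNE/no_a; rewrite mem_iota add0n ltnS.
  by rewrite mem_iota add0n ltnS => /andP [_ tD] at0; exists t; rewrite tD.
have [t /andP [tD at0] t_min] := ex_minnP ex.
have a_lt j : (j < t)%N -> a j = 0%N.
  move=> jt; apply/eqP; apply: contraTT (jt) => aj.
  by rewrite -leqNgt t_min // aj andbT (leq_trans (ltnW jt) tD).
have t_gt0 : (0 < t)%N by case: t at0 {t_min a_lt tD} => //; rewrite a0.
exists t; split; rewrite ?t_gt0 //=.
rewrite ltn_neqAle tD andbT; apply/eqP => tDe; apply: not_abip; split.
  by rewrite -tDe; apply/eqP.
by move=> i iD; apply: a_lt; lia.
Qed.

Lemma signr_sqr (R : pzRingType) n : (-1) ^+ n * (-1) ^+ n = 1 :> R.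
Proof. by rewrite -signr_odd -signr_addb addbb. Qed.

Lemma signr_pred (R : pzRingType) n : (0 < n)%N -> (-1) ^+ n.-1 = - (-1) ^+ n :> R.
Proof. by case: n => // n _; rewrite exprS mulN1r opprK. Qed.

Section PseudoCosine.
Variables (R : realFieldType) (D : nat) (a b c : nat -> nat).
Hypothesis ia : intersection_array D a b c.

Local Notation k := ((b 0%N)%:R : R).

Let c0 : c 0%N = 0%N. Proof. by case: ia. Qed.
Let a0 : a 0%N = 0%N. Proof. by case: ia. Qed.

Let kE i : (i <= D)%N -> k = (c i)%:R + (a i)%:R + (b i)%:R.
Proof. by case: ia => _ _ cab _ _ iD; rewrite -(cab i iD) !natrD. Qed.

Let c_gt0 i : (0 < i <= D)%N -> 0 < (c i)%:R :> R.
Proof. by case: ia => _ _ _ c_gt0 _ iD; rewrite ltr0n c_gt0. Qed.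

Let b_gt0 i : (i < D)%N -> 0 < (b i)%:R :> R.
Proof. by case: ia => _ _ _ _ b_gt0 iD; rewrite ltr0n b_gt0. Qed.

Lemma auxiliary1_factor (s r : nat -> R) i : auxiliary_parameter D s r 1 ->
  (0 < i <= D)%N -> s i = s i.-1 \/ r i = - r i.-1.
Proof.
move=> aux iD; move/eqP: (aux i iD); rewrite -subr_eq0.
have -> : s i * r i - s i.-1 * r i.-1 - 1 * (s i.-1 * r i - s i * r i.-1) =
    (s i - s i.-1) * (r i + r i.-1) by ring.
by rewrite mulf_eq0 subr_eq0 addr_eq0 => /orP [] /eqP; [left | right].
Qed.

Lemma pseudo_cosine_theta (theta : R) (s : nat -> R) :
  (0 < D)%N -> pseudo_cosine D a b c theta s -> theta = k * s 1%N.
Proof. by move=> D_gt0 [s0 rec]; have := rec 0%N D_gt0; rewrite c0 a0 s0 /=; lra. Qed.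

Lemma auxiliary1_theta (theta phi : R) (s r : nat -> R) : (0 < D)%N ->
    pseudo_cosine D a b c theta s -> pseudo_cosine D a b c phi r ->
    s 1%N != 1 -> auxiliary_parameter D s r 1 ->
  phi = - k.
Proof.
move=> D_gt0 pcs pcr s1 aux.
have [s10|r1] := auxiliary1_factor aux (i := 1%N) D_gt0.
  by move: s1; rewrite s10; case: pcs => ->; rewrite eqxx.
by rewrite (pseudo_cosine_theta D_gt0 pcr) r1; case: pcr => ->; rewrite mulrN1.
Qed.

Lemma pseudo_cosine_alternating (r : nat -> R) t :
    pseudo_cosine D a b c (- k) r -> (t <= D)%N ->
    (forall j, (j < t)%N -> a j = 0%N) ->
  forall i, (i <= t)%N -> r i = (-1) ^+ i.
Proof.
move=> [r0 rec] tD a_lt i; elim/ltn_ind: i => -[|i] IH it; first by rewrite r0.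
have iD : (i < D)%N by lia.
have ri : r i = (-1) ^+ i by apply: IH => //; lia.
have prev : (c i)%:R * r i.-1 = - ((c i)%:R * (-1) ^+ i).
  case: i {iD ri} IH it => [|i] IH it; first by rewrite c0 !mul0r oppr0.
  by rewrite /= (IH i) ?exprS ?mulN1r ?mulrN ?opprK //; lia.
have E := rec i iD; rewrite prev ri (kE (ltnW iD)) a_lt // in E.
by apply: (mulfI (lt0r_neq0 (b_gt0 iD))); rewrite exprS mulN1r; lra.
Qed.

Lemma pseudo_cosine_alternating_break (r : nat -> R) t :
    pseudo_cosine D a b c (- k) r -> (0 < t < D)%N -> a t != 0%N ->
    r t.-1 = (-1) ^+ t.-1 -> r t = (-1) ^+ t ->
  (-1) ^+ t * r t.+1 < -1.
Proof.
move=> [_ rec] /andP [t_gt0 tD] at0 rprev rt; have E := rec t tD.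
rewrite rprev rt (signr_pred _ t_gt0) (kE (ltnW tD)) in E.
have pp := signr_sqr R t; set p := (-1) ^+ t in E pp *.
have a_gt0 : 0 < (a t)%:R :> R by rewrite ltr0n lt0n.
have bw : (b t)%:R * (p * r t.+1) = - (2 * (a t)%:R + (b t)%:R).
  have -> : (b t)%:R * (p * r t.+1) = p * ((b t)%:R * r t.+1) by ring.
  have -> : (b t)%:R * r t.+1 = - (2 * (a t)%:R + (b t)%:R) * p by lra.
  by rewrite mulrCA pp mulr1.
have := b_gt0 tD; nra.
Qed.

Lemma pseudo_cosine_no_sign_flip (r : nat -> R) j n :
    pseudo_cosine D a b c (- k) r -> (0 < j < D)%N ->
    r j.-1 = (-1) ^+ n -> (-1) ^+ n * r j < -1 ->
  r j.+1 != - r j.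
Proof.
move=> [_ rec] /andP [j_gt0 jD] rprev w_lt; apply/eqP => flip.
have E := rec j jD; rewrite rprev flip (kE (ltnW jD)) in E.
have pp := signr_sqr R n; set p := (-1) ^+ n in E pp w_lt.
have E' : (c j)%:R * p + 2 * (a j)%:R * r j + (c j)%:R * r j = 0 by lra.
have : (c j)%:R * (1 + p * r j) + 2 * (a j)%:R * (p * r j) = 0.
  have -> : (c j)%:R * (1 + p * r j) + 2 * (a j)%:R * (p * r j) =
      (c j)%:R * (1 - p * p) + p * ((c j)%:R * p + 2 * (a j)%:R * r j + (c j)%:R * r j)
    by ring.
  by rewrite pp E' subrr !mulr0 addr0.
have cj : 0 < (c j)%:R :> R by apply: c_gt0; rewrite j_gt0 ltnW.
have aj : 0 <= (a j)%:R :> R by [].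
nra.
Qed.

Lemma pseudo_cosine_no_consecutive_zeros (theta : R) (s : nat -> R) m :
  pseudo_cosine D a b c theta s -> (m < D)%N -> s m = 0 -> s m.+1 != 0.
Proof.
move=> [s0 rec]; elim: m => [|m IH] mD sm.
  by move: sm; rewrite s0 => /eqP; rewrite oner_eq0.
apply/eqP => smm; have E := rec m.+1 mD; rewrite /= sm smm !mulr0 !addr0 in E.
have cm := lt0r_neq0 (c_gt0 (i := m.+1) (ltnW mD)).
move/eqP: E; rewrite mulf_eq0 (negbTE cm) /= => /eqP sm0.
by move: (IH (ltnW mD) sm0); rewrite sm eqxx.
Qed.

Lemma pseudo_cosine_no_three_equal (theta : R) (s : nat -> R) j :
    pseudo_cosine D a b c theta s -> s 1%N != 1 -> (j.+1 < D)%N ->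
  s j.+1 = s j -> s j.+2 != s j.+1.
Proof.
move=> pcs s1 jD sj; apply/eqP => sjj.
have th := pseudo_cosine_theta (ltn_trans (ltn0Sn j) jD) pcs.
have [_ rec] := pcs; have E := rec j.+1 jD.
rewrite /= sj sjj -sj th (kE (ltnW jD)) in E.
have : k * (s j.+1 * (1 - s 1%N)) = 0 by rewrite (kE (ltnW jD)); lra.
move/eqP; rewrite mulf_eq0 (negbTE (lt0r_neq0 (b_gt0 (ltn_trans (ltn0Sn j) jD)))).
rewrite mulf_eq0 subr_eq0 [1 == _]eq_sym (negbTE s1) orbF /= => /eqP v0.
by have := pseudo_cosine_no_consecutive_zeros pcs jD v0; rewrite sjj v0 eqxx.
Qed.

End PseudoCosine.

Theorem lemma8p2 (T : finType) (e : rel T) (D : nat) (a b c : nat -> nat)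
  (R : realFieldType) (s r : nat -> R) :
  distance_regular e D a b c ->
  (3 <= D)%N ->
  ~ bipartite_ia D a ->
  ~ almost_bipartite_ia D a ->
  nontrivial_pc D a b c s ->
  nontrivial_pc D a b c r ->
  tight_pair D a b c s r ->
  auxiliary_parameter D s r 1 ->
  [/\ (forall i : nat, (i <= D.-1)%N -> r i = (-1) ^+ i) /\ r D != (-1) ^+ D,
      s D.-1 = s D &
      (forall i : nat, (i <= D.-2)%N -> a i = 0%N) /\ a D.-1 <> 0%N].
Proof.
move=> drg D3 not_bip not_abip [[th pcs] s1] [[ph pcr] _] _ aux.
have ia := drg_intersection_array drg; have [_ a0 _ _ _] := ia.
have D_gt0 : (0 < D)%N by lia.
have ph_k := auxiliary1_theta ia D_gt0 pcs pcr s1 aux; subst ph.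
have [t [t_bounds at0 a_lt]] := first_nonzero_a not_bip not_abip a0.
have /andP [t_gt0 tD] := t_bounds.
have r_sign := pseudo_cosine_alternating ia pcr (ltnW tD) a_lt.
have w_lt := pseudo_cosine_alternating_break ia pcr t_bounds at0
  (r_sign _ (leq_pred t)) (r_sign _ (leqnn t)).
have s_t : s t.+1 = s t.
  have [//|flip] := auxiliary1_factor aux (i := t.+1) tD.
  by move: w_lt; rewrite flip r_sign // mulrN signr_sqr ltxx.
have tD1 : t.+1 = D.
  apply/eqP; rewrite eqn_leq tD leqNgt; apply/negP => tD2.
  have [] := auxiliary1_factor aux (i := t.+2) tD2.
  - exact/eqP/(pseudo_cosine_no_three_equal ia pcs s1 tD2 s_t).
  - apply/eqP/(pseudo_cosine_no_sign_flip ia pcr (j := t.+1) tD2 _ w_lt).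
    exact: r_sign.
subst D; split.
- split; first exact: r_sign.
  by apply: contraTneq w_lt => ->; rewrite exprS mulN1r mulrN signr_sqr ltxx.
- by rewrite /= s_t.
- by split; [move=> i it; apply: a_lt; lia | apply/eqP].
Qed.
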